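(* Let $D$ be the minimal Dress ring of $\mathbb{R}(X)$. Then: (1) for all $a,b\in D$ with $aD+bD=D$, the element $a^2+b^2$ is a unit of $D$ (so $D$ has square stable range one); (2) for $a=X/(1+X^2)$ and $b=(X^2-1)/(1+X^2)$ one has $a,b\in D$ and $aD+bD=D$, but $a+bz$ is not a unit of $D$ for any $z\in D$ (so $D$ does not have $1$ in the stable range).
   Context: $D$ denotes the minimal Dress ring of the field $\mathbb{R}(X)$, i.e. the subring of $\mathbb{R}(X)$ generated by $\mathbb{Z}$ and all elements $1/(1+h^2)$ with $h\in\mathbb{R}(X)$. *)

From HB Require Import structures.
From mathcomp Require Import all_boot all_order all_algebra.
Set Implicit Arguments. Unset Strict Implicit. Unset Printing Implicit Defensive.
Import Order.TTheory GRing.Theory Num.Theory.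
Local Open Scope ring_scope.

Definition ratfun (R : rcfType) := {fraction {poly R}}.

Definition Xf (R : rcfType) : ratfun R := FracField.tofrac ('X : {poly R}).

(* membership in the minimal Dress ring D of R(X): the subring generated by
   Z (i.e. by 1, using subtraction) and all 1/(1+h^2), h in R(X). *)
Inductive inD (R : rcfType) : ratfun R -> Prop :=
| inD_1 : inD 1
| inD_dress (h : ratfun R) : inD (1 / (1 + h ^+ 2))
| inD_sub (x y : ratfun R) : inD x -> inD y -> inD (x - y)
| inD_mul (x y : ratfun R) : inD x -> inD y -> inD (x * y).

Definition unitD (R : rcfType) (x : ratfun R) : Prop :=
  inD x /\ exists c : ratfun R, inD c /\ x * c = 1.

Definition comaxD (R : rcfType) (a b : ratfun R) : Prop :=
  exists u v : ratfun R, inD u /\ inD v /\ a * u + b * v = 1.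

From HB Require Import structures.
From mathcomp Require Import all_boot all_order all_algebra.
From mathcomp Require Import ring lra.
Import Order.TTheory GRing.Theory Num.Theory.
Set Implicit Arguments. Unset Strict Implicit. Unset Printing Implicit Defensive.
Local Open Scope ring_scope.
Local Notation "x %:F" := (@FracField.tofrac _ x) (format "x %:F").

(* (1) If [au + bv = 1] then [(a^2 + b^2)(u^2 + v^2) = 1 + (av - bu)^2], and
   [1/(1 + h^2)] is in [D] by definition, so [a^2 + b^2] is invertible in [D].
   (2) Every element of [D] can be written [p/q] with [q] without real roots:
   this holds for the generators, since [1/(1 + (p/q)^2) = q^2/(q^2 + p^2)] and
   [q^2 + p^2] has no real root when [p, q] are coprime, and such fractions form
   a ring. If [a + bz] with [z = p/q] had an inverse in [D], the numerator
   [Xq + (X^2 - 1)p] of [a + bz] would have no real root; but its values at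
   [-1] and [1] are [-q(-1)] and [q(1)], of opposite signs as [q] has no real
   root. *)

Lemma fraction_repr (R : idomainType) (f : {fraction R}) :
  exists p q : R, q != 0 /\ f = p%:F / q%:F.
Proof.
elim/quotW: f => x; exists \n_x, \d_x; split; first exact: denom_ratioP.
unlock FracField.tofrac.
transitivity (FracField.mul (\pi_({fraction R})%qT (Ratio \n_x 1))
   (FracField.inv (\pi_({fraction R})%qT (Ratio \d_x 1)))); last by [].
rewrite -FracField.pi_inv -FracField.pi_mul /FracField.invf /FracField.mulf.
by rewrite !numden_Ratio ?oner_eq0 ?denom_ratioP // mulr1 mul1r Ratio_numden.
Qed.

Lemma fraction_coprime_repr (K : fieldType) (f : {fraction {poly K}}) :
  exists p q : {poly K}, [/\ q != 0, coprimep p q & f = p%:F / q%:F].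
Proof.
have [p [q [q_neq0 ->]]] := fraction_repr f.
have cop : coprimep (p %/ gcdp p q) (q %/ gcdp p q).
  by apply: coprimep_div_gcd; rewrite q_neq0 orbT.
have g_neq0 : gcdp p q != 0 by rewrite gcdp_eq0 negb_and q_neq0 orbT.
have Ep : p = p %/ gcdp p q * gcdp p q by rewrite divpK // dvdp_gcdl.
have Eq : q = q %/ gcdp p q * gcdp p q by rewrite divpK // dvdp_gcdr.
move: Ep Eq cop g_neq0; set g := gcdp p q; set p' := p %/ g; set q' := q %/ g.
clearbody p' q' g => -> Eq cop g_neq0; rewrite Eq; exists p', q'; split => //.
  by apply: contra q_neq0 => /eqP q'0; rewrite Eq q'0 mul0r.
by rewrite !tofracM -mulf_div divff ?mulr1 // tofrac_eq0.
Qed.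

Lemma tofrac_horner_neq0 (R : idomainType) (p : {poly R}) t : p.[t] != 0 -> p%:F != 0.
Proof. by apply: contra; rewrite tofrac_eq0 => /eqP ->; rewrite horner0. Qed.

Lemma horner_sqr_add_sqr_neq0 (R : realFieldType) (p q : {poly R}) t :
  coprimep p q -> (q ^+ 2 + p ^+ 2).[t] != 0.
Proof.
move=> cop; rewrite hornerD !horner_exp.
have [pt0|pt_neq0] := eqVneq p.[t] 0.
  have qt_neq0 : q.[t] != 0 by apply: (coprimep_root cop); rewrite /root pt0.
  by rewrite pt0 expr0n addr0 sqrf_eq0.
by rewrite paddr_eq0 ?sqr_ge0 // negb_and !sqrf_eq0 pt_neq0 orbT.
Qed.

Section FieldIdentities.
Variable K : fieldType.
Implicit Types a b u v x p q n d : K.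

Lemma sqr_add_sqr_mul_comax a b u v : a * u + b * v = 1 ->
  (a ^+ 2 + b ^+ 2) * (u ^+ 2 + v ^+ 2) = 1 + (a * v - b * u) ^+ 2.
Proof. by move=> E; rewrite -[1](expr1n _ 2) -E; ring. Qed.

Lemma one_add_sqr_div p q : q != 0 -> 1 + (p / q) ^+ 2 = (q ^+ 2 + p ^+ 2) / q ^+ 2.
Proof. by move=> q_neq0; field; rewrite q_neq0. Qed.

Lemma mulf_div_eq1 n d p q : n / d * (p / q) = 1 -> n * p = d * q.
Proof. by rewrite mulf_div => /divr1_eq. Qed.

Lemma div_one_add_sqr_as_dress x : 2 != 0 :> K -> 1 + x ^+ 2 != 0 -> 1 - x != 0 ->
  x / (1 + x ^+ 2) = 1 / (1 + 1 ^+ 2) - 1 / (1 + ((1 + x) / (1 - x)) ^+ 2).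
Proof.
move=> two_neq0 x2_neq0 x1_neq0.
have y2_neq0 : (1 - x) ^+ 2 + (1 + x) ^+ 2 != 0.
  have -> : (1 - x) ^+ 2 + (1 + x) ^+ 2 = 2 * (1 + x ^+ 2) by ring.
  by rewrite mulf_neq0.
by field; rewrite two_neq0 x2_neq0 x1_neq0 y2_neq0.
Qed.

Lemma sqr_sub1_div_as_dress x : 1 + x ^+ 2 != 0 ->
  (x ^+ 2 - 1) / (1 + x ^+ 2) = 1 - 1 / (1 + x ^+ 2) - 1 / (1 + x ^+ 2).
Proof. by move=> x2_neq0; field; rewrite x2_neq0. Qed.

Lemma comax_example_identity x : 1 + x ^+ 2 != 0 ->
  x / (1 + x ^+ 2) * (4 * (x / (1 + x ^+ 2)))
  + (x ^+ 2 - 1) / (1 + x ^+ 2) * ((x ^+ 2 - 1) / (1 + x ^+ 2)) = 1.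
Proof. by move=> x2_neq0; field; rewrite x2_neq0. Qed.

Lemma example_add_mul_div x p q : 1 + x ^+ 2 != 0 -> q != 0 ->
  x / (1 + x ^+ 2) + (x ^+ 2 - 1) / (1 + x ^+ 2) * (p / q)
  = (x * q + (x ^+ 2 - 1) * p) / ((1 + x ^+ 2) * q).
Proof. by move=> x2_neq0 q_neq0; field; rewrite x2_neq0 q_neq0. Qed.

End FieldIdentities.

Section PoleFree.
Variable R : rcfType.
Local Notation F := (ratfun R).
Implicit Types (f g h : F) (p q n d : {poly R}) (t : R).

Lemma one_add_sqr_neq0 h : 1 + h ^+ 2 != 0.
Proof.
have [p [q [q_neq0 cop ->]]] := fraction_coprime_repr h.
rewrite one_add_sqr_div ?tofrac_eq0 // mulf_neq0 ?invr_eq0 ?expf_neq0 ?tofrac_eq0 //.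
by rewrite -!tofracXn -tofracD (tofrac_horner_neq0 (horner_sqr_add_sqr_neq0 0 cop)).
Qed.

Definition pole_free f :=
  exists p q, (forall t, q.[t] != 0) /\ f = p%:F / q%:F.

Lemma pole_free_dress h : pole_free (1 / (1 + h ^+ 2)).
Proof.
have [p [q [q_neq0 cop ->]]] := fraction_coprime_repr h.
exists (q ^+ 2), (q ^+ 2 + p ^+ 2); split=> [t|]; first exact: horner_sqr_add_sqr_neq0.
by rewrite one_add_sqr_div ?tofrac_eq0 // div1r invf_div tofracD !tofracXn.
Qed.

Lemma pole_free_inD f : inD f -> pole_free f.
Proof.
have tofrac_neq0 q : (forall t, q.[t] != 0) -> q%:F != 0 :> F.
  by move=> q_neq0; apply: (tofrac_horner_neq0 (q_neq0 0)).
elim=> [|h|_ _ _ [p1 [q1 [q1P ->]]] _ [p2 [q2 [q2P ->]]]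
        |_ _ _ [p1 [q1 [q1P ->]]] _ [p2 [q2 [q2P ->]]]].
- by exists 1, 1; rewrite tofrac1 divr1; split=> // t; rewrite hornerC oner_eq0.
- exact: pole_free_dress.
- exists (p1 * q2 - p2 * q1), (q1 * q2); split=> [t|].
    by rewrite hornerM mulf_neq0.
  by rewrite tofracB !tofracM -mulNr addf_div ?tofrac_neq0 // mulNr.
- exists (p1 * p2), (q1 * q2); split=> [t|].
    by rewrite hornerM mulf_neq0.
  by rewrite !tofracM mulf_div.
Qed.

Lemma pole_free_unit_numer_neq0 n d g : (forall t, d.[t] != 0) ->
  pole_free g -> n%:F / d%:F * g = 1 -> forall t, n.[t] != 0.
Proof.
move=> d_neq0 [p [q [q_neq0 ->]]] /mulf_div_eq1 E t.
move: E; rewrite -!tofracM => /eqP; rewrite tofrac_eq.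
move=> /eqP /(congr1 (horner^~ t)) /eqP; rewrite !hornerM.
by apply: contraL => /eqP ->; rewrite mul0r eq_sym mulf_neq0.
Qed.

End PoleFree.

Section DressRing.
Variable R : rcfType.
Local Notation F := (ratfun R).
Implicit Types x y a b : F.

Lemma inD0 : inD (0 : F).
Proof. by rewrite -(subrr (1 : F)); apply: inD_sub; apply: inD_1. Qed.

Lemma inD_opp x : inD x -> inD (- x).
Proof. by move=> Dx; rewrite -sub0r; apply: inD_sub => //; apply: inD0. Qed.

Lemma inD_add x y : inD x -> inD y -> inD (x + y).
Proof. by move=> Dx Dy; rewrite -[y]opprK; apply: inD_sub => //; apply: inD_opp. Qed.

Lemma inD_natr n : inD (n%:R : F).
Proof.
elim: n => [|n IHn]; first exact: inD0.
by rewrite mulrS; apply: inD_add => //; apply: inD_1.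
Qed.

Lemma inD_sqr x : inD x -> inD (x ^+ 2).
Proof. by move=> Dx; rewrite expr2; apply: inD_mul. Qed.

Lemma unitD_sqr_add_sqr a b : inD a -> inD b -> comaxD a b -> unitD (a ^+ 2 + b ^+ 2).
Proof.
move=> Da Db [u [v [Du [Dv E]]]].
split; first by apply: inD_add; apply: inD_sqr.
exists ((u ^+ 2 + v ^+ 2) * (1 / (1 + (a * v - b * u) ^+ 2))); split.
  by apply: inD_mul; [apply: inD_add; apply: inD_sqr | apply: inD_dress].
by rewrite mulrA (sqr_add_sqr_mul_comax E) div1r (mulfV (one_add_sqr_neq0 _)).
Qed.

End DressRing.

Section Example.
Variable R : rcfType.
Local Notation F := (ratfun R).
Local Notation x := (Xf R).
Local Notation a := (x / (1 + x ^+ 2)).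
Local Notation b := ((x ^+ 2 - 1) / (1 + x ^+ 2)).

Lemma one_sub_Xf_neq0 : 1 - x != 0.
Proof.
rewrite /Xf -tofrac1 -tofracB (@tofrac_horner_neq0 _ _ 0) //.
by rewrite !hornerE subr0 oner_eq0.
Qed.

Lemma two_neq0 : 2 != 0 :> F.
Proof.
rewrite -(rmorph_nat (@FracField.tofrac {poly R}) 2) (@tofrac_horner_neq0 _ _ 0) //.
by rewrite -[2]/(1 *+ 2) hornerMn hornerC pnatr_eq0.
Qed.

Lemma inD_example_a : inD a.
Proof.
rewrite (div_one_add_sqr_as_dress two_neq0 (one_add_sqr_neq0 x) one_sub_Xf_neq0).
by apply: inD_sub; apply: inD_dress.
Qed.

Lemma inD_example_b : inD b.
Proof.
rewrite (sqr_sub1_div_as_dress (one_add_sqr_neq0 x)).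
by apply: inD_sub; [apply: inD_sub; [apply: inD_1|]|]; apply: inD_dress.
Qed.

Lemma comaxD_example : comaxD a b.
Proof.
exists (4 * a), b; split; [|split; [exact: inD_example_b|]].
  by apply: inD_mul; [apply: inD_natr | apply: inD_example_a].
exact: (comax_example_identity (one_add_sqr_neq0 x)).
Qed.

(* [N * q] takes the values [-q(-1)^2] and [q(1)^2] at [-1] and [1]. *)
Lemma Xmul_add_sqrX_sub1_mul_has_root (p q : {poly R}) : (forall t, q.[t] != 0) ->
  exists t, ('X * q + ('X ^+ 2 - 1) * p).[t] = 0.
Proof.
move=> q_neq0; set N := _ + _.
have [t _] : exists2 t, -1 <= t <= 1 & root (N * q) t.
  apply: poly_ivt; first by lra.
  by rewrite /N !hornerE; apply/andP; split; nra.
by rewrite rootE hornerM mulf_eq0 (negbTE (q_neq0 t)) orbF => /eqP; exists t.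
Qed.

Lemma not_unitD_example z : inD z -> ~ unitD (a + b * z).
Proof.
move=> Dz [_ [c [Dc E]]].
have [p [q [q_neq0 Ez]]] := pole_free_inD Dz.
have den_neq0 t : ((1 + 'X ^+ 2) * q).[t] != 0.
  by rewrite hornerM mulf_neq0 // !hornerE paddr_eq0 ?sqr_ge0 // oner_eq0.
have qF := tofrac_horner_neq0 (q_neq0 0).
have [t /eqP] := Xmul_add_sqrX_sub1_mul_has_root p q_neq0; apply/negP.
apply: (pole_free_unit_numer_neq0 den_neq0 (pole_free_inD Dc)).
rewrite -[RHS]E Ez (example_add_mul_div _ (one_add_sqr_neq0 x) qF).
by rewrite !(tofracXn, tofracM, tofracD, tofracB, tofracN, tofrac1).
Qed.

End Example.

Theorem mainTheorem10 (R : rcfType) :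
  (forall a b : ratfun R, inD a -> inD b -> comaxD a b ->
     unitD (a ^+ 2 + b ^+ 2))
  /\
  (let a := Xf R / (1 + Xf R ^+ 2) in
   let b := (Xf R ^+ 2 - 1) / (1 + Xf R ^+ 2) in
   inD a /\ inD b /\ comaxD a b /\
   forall z : ratfun R, inD z -> ~ unitD (a + b * z)).
Proof.
split=> [|a b]; first exact: unitD_sqr_add_sqr.
split; first exact: inD_example_a.
split; first exact: inD_example_b.
split; first exact: comaxD_example.
exact: not_unitD_example.
Qed.
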